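(* Let $\mathcal{X}=\mathbb{R}$, let $t_1,\dots,t_n$ be $n$ distinct real numbers, and let $\mathcal{H}=\{x\mapsto 2I(x\le t)-1: t\in\{t_1,\dots,t_n\}\}$. Then for every integer $k\ge0$, \[ \mathrm{ELdim}(\mathcal{H},k)=\max\Big\{t:\binom{t}{\le k+1}\le n\Big\}. \]
   Context: $\binom{t}{\le j}=\sum_{i=0}^{j}\binom{t}{i}$. Extended mistake tree w.r.t. $\mathcal{H}$: a finite full binary tree (possibly a single leaf) in which each internal node $v$ is labeled by $x_v\in\mathcal{X}$ and has two solid downward edges, to its left child (label $-1$) and right child (label $+1$), plus one dashed downward edge to one of its two children; each leaf is labeled by some $h\in\mathcal{H}$ with $h(x_v)$ equal to the direction label at every internal node $v$ on the root-to-leaf path. A root-to-leaf path chooses at each internal node one downward edge; its length is its number of edges. The tree is $(k,m)$-difficult if every root-to-leaf path using at most $k$ solid edges has length at least $m$. $\mathrm{ELdim}(\mathcal{H},k)$ is the supremum of $m$ such that a $(k,m)$-difficult extended mistake tree w.r.t. $\mathcal{H}$ exists. *)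

From Stdlib Require Import Reals.
From mathcomp Require Import all_boot.
Set Implicit Arguments. Unset Strict Implicit. Unset Printing Implicit Defensive.

Definition binom_le (t j : nat) : nat := \sum_(i < j.+1) 'C(t, i).

(* Labels: true = +1, false = -1. *)

(* Extended tree over instance type X: a leaf carries a hypothesis
   X -> bool; an internal node carries x_v, a left child (label -1),
   a right child (label +1), and a dashed edge going to the right child
   if the boolean is true and to the left child otherwise. *)
Inductive etree (X : Type) : Type :=
| ELeaf : (X -> bool) -> etree X
| ENode : X -> bool -> etree X -> etree X -> etree X.
Arguments ELeaf {X}.
Arguments ENode {X}.

Fixpoint consistent_with (X : Type) (H : (X -> bool) -> Prop)
    (C : seq (X * bool)) (T : etree X) : Prop :=
  match T with
  | ELeaf h => H h /\ (forall c, List.In c C -> h c.1 = c.2)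
  | ENode x _ l r =>
      consistent_with H ((x, false) :: C) l /\ consistent_with H ((x, true) :: C) r
  end.

Definition ext_mistake_tree (X : Type) (H : (X -> bool) -> Prop) (T : etree X) : Prop :=
  consistent_with H [::] T.

Inductive edge := SolidL | SolidR | Dashed.

Definition is_solid (e : edge) : bool :=
  match e with Dashed => false | _ => true end.

Fixpoint rtl_path (X : Type) (T : etree X) (p : seq edge) : Prop :=
  match T, p with
  | ELeaf _, [::] => True
  | ELeaf _, _ :: _ => False
  | ENode _ _ _ _, [::] => False
  | ENode _ d l r, e :: p' =>
      match e with
      | SolidL => rtl_path l p'
      | SolidR => rtl_path r p'
      | Dashed => rtl_path (if d then r else l) p'
      end
  end.

Definition difficult (X : Type) (k m : nat) (T : etree X) : Prop :=
  forall p, rtl_path T p -> count is_solid p <= k -> m <= size p.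

Definition is_max_nat (P : nat -> Prop) (M : nat) : Prop :=
  P M /\ (forall m, P m -> m <= M).

Definition ELdim_eq (X : Type) (H : (X -> bool) -> Prop) (k M : nat) : Prop :=
  is_max_nat (fun m => exists T, ext_mistake_tree H T /\ difficult k m T) M.

Definition thr (t : R) : R -> bool :=
  fun x => if Rle_dec x t then true else false.

Definition threshold_class (n : nat) (ts : 'I_n -> R) : (R -> bool) -> Prop :=
  fun h => exists i : 'I_n, h = thr (ts i).

From Stdlib Require Import Reals Lra.
From mathcomp Require Import all_boot zify.

Set Implicit Arguments.
Unset Strict Implicit.

(* Write [B(t, j) = binom_le t j].  Pascal's rule gives
   [B(t+1, k+1) = B(t, k+1) + B(t, k)], and both bounds follow it.
   Upper bound, for any finite class: at an internal node the dashed child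
   must still be [(k, m-1)]-difficult and the other child
   [(k-1, m-1)]-difficult, and the two children split the hypotheses
   consistent with the path so far; by induction a [(k, m)]-difficult tree
   needs at least [B(m, k+1)] consistent hypotheses.
   Lower bound, for thresholds: list them in increasing order, split the
   list into an initial part of length [>= B(m-1, k+1)] and a final part of
   length [B(m-1, k)] starting at [t_j], query [x = t_j], and recurse with
   the dashed edge towards the initial part. *)

Lemma binom_le0 j : binom_le 0 j = 1.
Proof. by rewrite /binom_le big_ord_recl bin0 big1. Qed.

Lemma binom_le_n0 t : binom_le t 0 = 1.
Proof. by rewrite /binom_le big_ord1 bin0. Qed.

Lemma binom_le_gt0 t j : 0 < binom_le t j.
Proof. by rewrite /binom_le big_ord_recl bin0. Qed.

Lemma binom_leS t j : binom_le t.+1 j.+1 = binom_le t j.+1 + binom_le t j.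
Proof.
rewrite /binom_le big_ord_recl [in RHS]big_ord_recl !bin0 -addnA.
under eq_bigr do rewrite lift0 binS.
by under [in RHS]eq_bigr do rewrite lift0; rewrite big_split.
Qed.

Lemma ltn_binom_le t j : t < binom_le t j.+1.
Proof.
elim: t => [|t IHt]; first by rewrite binom_le0.
by rewrite binom_leS; have := binom_le_gt0 t j; lia.
Qed.

Lemma difficult_dashed (X : Type) k m x d (l r : etree X) :
  difficult k m.+1 (ENode x d l r) -> difficult k m (if d then r else l).
Proof. by move=> Hd p Hp; apply: (Hd (Dashed :: p)). Qed.

Lemma difficult_solid (X : Type) k m x d (l r : etree X) :
  difficult k.+1 m.+1 (ENode x d l r) -> difficult k m l /\ difficult k m r.
Proof. by move=> Hd; split=> p Hp; [apply: (Hd (SolidL :: p)) | apply: (Hd (SolidR :: p))]. Qed.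

Lemma difficult_ENode (X : Type) k m x (l r : etree X) :
  difficult k m l -> (0 < k -> difficult k.-1 m r) ->
  difficult k m.+1 (ENode x false l r).
Proof.
move=> Hl Hr [|[] p] //= Hp; rewrite ?add1n ?ltnS => Hc.
- by apply: Hl => //; lia.
- by apply: Hr => //; lia.
- exact: Hl.
Qed.

Section FiniteClass.
Variables (X : Type) (I : finType) (hyp : I -> X -> bool).

Definition finite_class (h : X -> bool) : Prop := exists i, h = hyp i.

Definition agrees (C : seq (X * bool)) (h : X -> bool) : bool :=
  all (fun c => h c.1 == c.2) C.

Lemma agreesP C h : reflect (forall c, List.In c C -> h c.1 = c.2) (agrees C h).
Proof.
elim: C => [|c C IHC] /=; first by left.
apply: (iffP andP) => [[/eqP hc /IHC HC] c' [<- | /HC] //|HC].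
by split; [apply/eqP/HC; left | apply/IHC => c' Hc'; apply: HC; right].
Qed.

Definition version_space C : {set I} := [set i | agrees C (hyp i)].

Lemma card_version_space_split C x :
  #|version_space C| =
  #|version_space ((x, true) :: C)| + #|version_space ((x, false) :: C)|.
Proof.
rewrite -(cardsID [set i | hyp i x] (version_space C)).
by congr (_ + _); apply: eq_card => i; rewrite !inE /= ?eqb_id ?eqbF_neg andbC.
Qed.

Lemma card_version_space_gt0 C T :
  consistent_with finite_class C T -> 0 < #|version_space C|.
Proof.
elim: T C => [h|x d l IHl r IHr] C /=.
  by move=> [[i ->] /agreesP HC]; apply/card_gt0P; exists i; rewrite inE.
by move=> [/IHl Hl _]; rewrite (card_version_space_split C x); lia.
Qed.

Lemma binom_le_card_version_space T C k m :
  consistent_with finite_class C T -> difficult k m T ->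
  binom_le m k.+1 <= #|version_space C|.
Proof.
elim: T C k m => [h|x d l IHl r IHr] C k m HT.
  move=> Hd; have /= := Hd [::] Logic.I isT; rewrite leqn0 => /eqP ->.
  by rewrite binom_le0; apply: card_version_space_gt0 HT.
case: m => [|m] Hd; first by rewrite binom_le0; apply: card_version_space_gt0 HT.
case: HT => Hl Hr; have Hdash := difficult_dashed Hd.
have Hsolid : binom_le m k <= #|version_space ((x, ~~ d) :: C)|.
  case: k Hd Hdash => [|k] Hd _.
    by rewrite binom_le_n0; case: d Hd => _;
      [apply: card_version_space_gt0 Hl | apply: card_version_space_gt0 Hr].
  have [Hdl Hdr] := difficult_solid Hd.
  by case: d Hd => _; [apply: IHl Hl Hdl | apply: IHr Hr Hdr].
rewrite binom_leS (card_version_space_split C x).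
case: d Hd Hdash Hsolid => _ Hdash /=.
- by have := IHr _ _ _ Hr Hdash; lia.
- by have := IHl _ _ _ Hl Hdash; lia.
Qed.

End FiniteClass.

Section Thresholds.
Variables (n : nat) (ts : 'I_n -> R).

Definition ts_lt : rel 'I_n := fun i j => Rlt_dec (ts i) (ts j).
Definition ts_le : rel 'I_n := fun i j => Rle_dec (ts i) (ts j).

Lemma thr_ts_lt i j : ts_lt i j -> thr (ts i) (ts j) = false.
Proof. by rewrite /ts_lt /thr; case: Rlt_dec => // ? _; case: Rle_dec => // ?; lra. Qed.

Lemma thr_ts_ge i j : ~~ ts_lt i j -> thr (ts i) (ts j) = true.
Proof. by rewrite /ts_lt /thr; case: Rlt_dec => // ? _; case: Rle_dec => // ?; lra. Qed.

Lemma ts_lt_irr : irreflexive ts_lt.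
Proof. by move=> i; rewrite /ts_lt; case: Rlt_dec => // ?; lra. Qed.

Lemma ts_lt_asym i j : ts_lt i j -> ~~ ts_lt j i.
Proof. by rewrite /ts_lt; case: Rlt_dec => // ? _; case: Rlt_dec => // ?; lra. Qed.

Lemma consistent_threshold_leaf C i :
  agrees C (thr (ts i)) -> consistent_with (threshold_class ts) C (ELeaf (thr (ts i))).
Proof. by move=> /agreesP HC; split; first exists i. Qed.

Lemma threshold_difficult_tree m k s C :
  pairwise ts_lt s -> all (fun i => agrees C (thr (ts i))) s ->
  binom_le m k.+1 <= size s ->
  exists T, consistent_with (threshold_class ts) C T /\ difficult k m T.
Proof.
elim: m k s C => [|m IHm] k s C Hs HC.
  case: s Hs HC => [|i s] _; rewrite binom_le0 //= => /andP [Hi _] _.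
  by exists (ELeaf (thr (ts i))); split=> //; apply: consistent_threshold_leaf.
rewrite binom_leS => Hsize.
set a := size s - binom_le m k.
have Hsize1 : binom_le m k.+1 <= size (take a s) by rewrite size_takel ?leq_subr // /a; lia.
have : size (drop a s) = binom_le m k by rewrite size_drop /a; lia.
case Es2: (drop a s) => [|j s2] Hsize2; first by have := binom_le_gt0 m k; rewrite -Hsize2.
have Es : s = take a s ++ j :: s2 by rewrite -Es2 cat_take_drop.
move: Hs HC; rewrite Es pairwise_cat all_cat /= => /and3P [/allrelP Hlt Hs1 /andP [Hj Hs2]].
move=> /and3P [HC1 HCj HC2].
have [L [HL HdL]] : exists L,
    consistent_with (threshold_class ts) ((ts j, false) :: C) L /\ difficult k m L.
  apply: IHm Hs1 _ Hsize1; apply/allP => i Hi /=; rewrite (allP HC1) // andbT.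
  by rewrite thr_ts_lt // Hlt ?mem_head.
have HCR : all (fun i => agrees ((ts j, true) :: C) (thr (ts i))) (j :: s2).
  apply/allP => i; rewrite /= inE => /predU1P [-> | Hi].
    by rewrite thr_ts_ge ?ts_lt_irr ?HCj.
  by rewrite (allP HC2) // thr_ts_ge // ts_lt_asym // (allP Hj).
have [R0 [HR HdR]] : exists R0, consistent_with (threshold_class ts) ((ts j, true) :: C) R0
    /\ (0 < k -> difficult k.-1 m R0).
  have [k0 | k_gt0] := posnP k.
    exists (ELeaf (thr (ts j))); split; last by rewrite k0.
    by apply: consistent_threshold_leaf; case/andP: HCR.
  have Hpw : pairwise ts_lt (j :: s2) by rewrite /= Hj.
  have Hsize' : binom_le m k.-1.+1 <= size (j :: s2) by rewrite prednK // Hsize2.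
  have [T [HT HdT]] := IHm k.-1 (j :: s2) _ Hpw HCR Hsize'.
  by exists T.
exists (ENode (ts j) false L R0); split; first by split.
exact: difficult_ENode.
Qed.

Lemma pairwise_ts_lt_sort : injective ts -> pairwise ts_lt (sort ts_le (enum 'I_n)).
Proof.
move=> ts_inj.
have ts_le_total : total ts_le.
  by move=> i j; rewrite /ts_le; case: Rle_dec => //= ?; case: Rle_dec => // ?; lra.
have ts_le_trans : transitive ts_le.
  move=> j i l; rewrite /ts_le.
  by case: Rle_dec => // ? _; case: Rle_dec => // ? _; case: Rle_dec => // ?; lra.
have : pairwise [rel i j | ts_le i j && (i != j)] (sort ts_le (enum 'I_n)).
  rewrite pairwise_relI -sorted_pairwise // sort_sorted //=.
  by rewrite -uniq_pairwise sort_uniq enum_uniq.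
apply: sub_pairwise => i j /= /andP [].
rewrite /ts_le /ts_lt; case: Rle_dec => // Hle _ /eqP Hneq.
by case: Rlt_dec => // Hnlt; case: Hneq; apply: ts_inj; lra.
Qed.

End Thresholds.

Theorem mainTheorem9 (n : nat) (ts : 'I_n -> R) (n_pos : 0 < n)
    (ts_inj : injective ts) (k : nat) :
  exists M : nat,
    is_max_nat (fun t => binom_le t k.+1 <= n) M /\
    ELdim_eq (threshold_class ts) k M.
Proof.
have exP : exists t, binom_le t k.+1 <= n by exists 0; rewrite binom_le0.
have ubP t : binom_le t k.+1 <= n -> t <= n.
  by have := ltn_binom_le t k; lia.
case: (ex_maxnP exP ubP) => M HM maxM.
exists M; split; first by split.
split.
- have Hsort := pairwise_ts_lt_sort ts_inj.
  have Hsize : binom_le M k.+1 <= size (sort (ts_le ts) (enum 'I_n)).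
    by rewrite size_sort size_enum_ord.
  have [|T [HT HdT]] := threshold_difficult_tree (C := [::]) Hsort _ Hsize.
    by apply/allP.
  by exists T.
- move=> m [T [HT HdT]]; apply: maxM.
  have := binom_le_card_version_space (hyp := fun i => thr (ts i)) HT HdT.
  by have := max_card (version_space (fun i => thr (ts i)) [::]); rewrite card_ord; lia.
Qed.
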